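(* Let $G=(V,E)$ be a strongly connected directed multigraph with distinct vertices $s,t\in V$ such that $G$ contains at least one arc $(t,s)$. Let $f$ be a flow from $s$ to $t$ in $G$ that does not use any arc $(t,s)$. If there is a directed path from $s$ to $t$ in $G_f$, then $G_f$ is strongly connected.
   Context: A flow from $s$ to $t$ in $G$ is a set of arc-disjoint directed paths from $s$ to $t$ in $G$. The residual graph $G_f$ is obtained from $G$ by reversing each arc lying on a path of $f$. (In the paper, $G$ arises from an input graph by adding $m$ parallel arcs $(t,s)$ and keeping only the strongly connected component containing $s$ and $t$.) *)

(* A directed multigraph on vertex set V (a finType) is given by
   a finite arc type A with tail/head maps [src dst : A -> V]; parallel arcs and
   loops are allowed. *)
From mathcomp Require Import all_boot.
Set Implicit Arguments. Unset Strict Implicit. Unset Printing Implicit Defensive.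

Section Digraph.
Variables (V A : finType) (src dst : A -> V).

Fixpoint is_walk (u v : V) (p : seq A) : bool :=
  match p with
  | [::] => u == v
  | a :: p' => (src a == u) && is_walk (dst a) v p'
  end.

Definition walk_vertices (u : V) (p : seq A) : seq V := u :: map dst p.

Definition is_dpath (u v : V) (p : seq A) : bool :=
  is_walk u v p && uniq (walk_vertices u p).

Definition strongly_connected : Prop :=
  forall u v : V, exists p : seq A, is_dpath u v p.

(* A flow from s to t: a set (list) of arc-disjoint directed s-t paths. *)
Definition is_flow (s t : V) (f : seq (seq A)) : bool :=
  all (is_dpath s t) f && uniq (flatten f).

Definition flow_arcs (f : seq (seq A)) : seq A := flatten f.

End Digraph.

(* Residual graph G_f: same vertices and arcs, every arc on a path of f reversed. *)
Definition res_src (V A : finType) (src dst : A -> V) (f : seq (seq A)) (a : A) : V :=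
  if a \in flow_arcs f then dst a else src a.
Definition res_dst (V A : finType) (src dst : A -> V) (f : seq (seq A)) (a : A) : V :=
  if a \in flow_arcs f then src a else dst a.

(* Every arc (u, v) of G is still traversable from u to v in G_f.  Arcs off the
   flow are unchanged.  An arc a on a flow path P = P1 ++ a :: P2 from s to t is
   replaced by the walk that runs P1 backwards to s, follows the given s-t path
   of G_f, and runs P2 backwards from t to the head of a; all arcs of P1 and P2
   are reversed in G_f.  Hence strong connectivity of G passes to G_f. *)
From mathcomp Require Import all_boot.
Set Implicit Arguments. Unset Strict Implicit. Unset Printing Implicit Defensive.

Section Walks.
Variables (V A : finType) (src dst : A -> V).

Lemma is_walk_cat u v w p q :
  is_walk src dst u v p -> is_walk src dst v w q -> is_walk src dst u w (p ++ q).
Proof.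
elim: p u => [|a p IH] u /=; first by move/eqP->.
by case/andP=> -> /IH.
Qed.

Lemma is_walk_split u v p1 a p2 : is_walk src dst u v (p1 ++ a :: p2) ->
  is_walk src dst u (src a) p1 /\ is_walk src dst (dst a) v p2.
Proof.
elim: p1 u => [|b p1 IH] u /=; first by case/andP=> /eqP-> ->; rewrite eqxx.
by case/andP=> -> /IH.
Qed.

Lemma is_walk_suffix x v q u :
    is_walk src dst x v q -> u \in walk_vertices dst x q ->
  exists2 q', is_walk src dst u v q' &
    (uniq (walk_vertices dst x q) -> uniq (walk_vertices dst u q')).
Proof.
elim: q x => [|b q IH] x /=.
  by rewrite inE => /eqP-> /eqP->; exists [::]; rewrite /= ?eqxx.
case/andP=> /eqP src_b walk_q; rewrite inE; case: eqP => [-> _|_ /= u_q].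
  by exists (b :: q); rewrite /= ?src_b ?eqxx.
have [q' walk_q' uniq_q'] := IH _ walk_q u_q.
by exists q' => // /andP[].
Qed.

Lemma is_dpath_of_walk u v p :
  is_walk src dst u v p -> exists q, is_dpath src dst u v q.
Proof.
elim: p u => [|a p IH] u /=; first by move=> eq_uv; exists [::]; rewrite /is_dpath /= eq_uv.
case/andP=> /eqP src_a /IH [q /andP[walk_q uniq_q]].
have [u_q | u_notin_q] := boolP (u \in walk_vertices dst (dst a) q).
  have [q' walk_q' uniq_q'] := is_walk_suffix walk_q u_q.
  by exists q'; rewrite /is_dpath walk_q' uniq_q'.
by exists (a :: q); rewrite /is_dpath /= src_a eqxx walk_q u_notin_q.
Qed.

Definition reachable (u v : V) : Prop := exists p, is_walk src dst u v p.

Lemma reachable_refl u : reachable u u.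
Proof. by exists [::]; rewrite /= eqxx. Qed.

Lemma reachable_trans u v w : reachable u v -> reachable v w -> reachable u w.
Proof. by move=> [p walk_p] [q walk_q]; exists (p ++ q); apply: is_walk_cat walk_q. Qed.

End Walks.

Lemma strongly_connected_reachable_arcs (V A B : finType)
    (src dst : A -> V) (src' dst' : B -> V) :
  strongly_connected src dst ->
  (forall a, reachable src' dst' (src a) (dst a)) ->
  strongly_connected src' dst'.
Proof.
move=> scG reach_arcs u v; have [p /andP[walk_p _]] := scG u v.
suff [q walk_q] : reachable src' dst' u v by apply: is_dpath_of_walk walk_q.
elim: p u walk_p => [|a p IH] u /=; first by move/eqP->; apply: reachable_refl.
by case/andP=> /eqP<- /IH; apply: reachable_trans.
Qed.

Section Residual.
Variables (V A : finType) (src dst : A -> V) (f : seq (seq A)).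
Local Notation rsrc := (res_src src dst f).
Local Notation rdst := (res_dst src dst f).

Lemma res_walk_rev x y q : is_walk src dst x y q -> {subset q <= flow_arcs f} ->
  is_walk rsrc rdst y x (rev q).
Proof.
elim: q x => [|b q IH] x /=; first by rewrite eq_sym.
case/andP=> /eqP src_b walk_q q_flow.
rewrite rev_cons -cats1; apply: (is_walk_cat (IH _ walk_q _)).
  by move=> c c_q; apply: q_flow; rewrite inE c_q orbT.
by rewrite /= /res_src /res_dst q_flow ?inE ?eqxx // src_b eqxx.
Qed.

Lemma res_reachable_arc s t a :
    all (is_walk src dst s t) f -> reachable rsrc rdst s t ->
  reachable rsrc rdst (src a) (dst a).
Proof.
move=> walks_f reach_st.
have [a_flow | a_off] := boolP (a \in flow_arcs f); last first.
  by exists [:: a]; rewrite /= /res_src /res_dst (negbTE a_off) !eqxx.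
have /flattenP [P P_f a_P] := a_flow.
have P_flow : {subset P <= flow_arcs f} by move=> b b_P; apply/flattenP; exists P.
have walk_P := allP walks_f P P_f.
case/splitPr: a_P walk_P P_flow => P1 P2 /is_walk_split [walk_P1 walk_P2] P_flow.
have reach_src_s : reachable rsrc rdst (src a) s.
  by exists (rev P1); apply: res_walk_rev walk_P1 _ => b b_P1;
    apply: P_flow; rewrite mem_cat b_P1.
have reach_t_dst : reachable rsrc rdst t (dst a).
  by exists (rev P2); apply: res_walk_rev walk_P2 _ => b b_P2;
    apply: P_flow; rewrite mem_cat inE b_P2 !orbT.
exact: reachable_trans reach_src_s (reachable_trans reach_st reach_t_dst).
Qed.

End Residual.

Theorem lemma1p3 (V A : finType) (src dst : A -> V) (s t : V)
  (f : seq (seq A)) :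
  strongly_connected src dst ->
  s != t ->
  (exists a : A, src a = t /\ dst a = s) ->
  is_flow src dst s t f ->
  (forall a : A, a \in flow_arcs f -> ~ (src a = t /\ dst a = s)) ->
  (exists p : seq A, is_dpath (res_src src dst f) (res_dst src dst f) s t p) ->
  strongly_connected (res_src src dst f) (res_dst src dst f).
Proof.
move=> scG _ _ /andP[dpaths_f _] _ [p /andP[walk_p _]].
have walks_f : all (is_walk src dst s t) f.
  by apply: sub_all dpaths_f => P /andP[].
apply: strongly_connected_reachable_arcs scG _ => a.
by apply: res_reachable_arc walks_f _; exists p.
Qed.
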